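(* Let $\xi_1,\dots,\xi_n$ be independent real random variables with $\mathbf{E}\xi_i=0$, satisfying Bernstein's condition: there is a constant $\varepsilon>0$ such that $|\mathbf{E}\xi_i^k|\le \frac12 k!\,\varepsilon^{k-2}\mathbf{E}\xi_i^2$ for all $k\ge 3$ and $i=1,\dots,n$. Let $\sigma^2=\sum_{i=1}^n\mathbf{E}\xi_i^2$ and, for $0\le\lambda<\varepsilon^{-1}$, \[ \overline{\sigma}^2(\lambda)=\sum_{i=1}^n\Big(\frac{\mathbf{E}\xi_i^2e^{\lambda\xi_i}}{\mathbf{E}e^{\lambda\xi_i}}-\frac{(\mathbf{E}\xi_ie^{\lambda\xi_i})^2}{(\mathbf{E}e^{\lambda\xi_i})^2}\Big). \] Then for all $0\le\lambda<\varepsilon^{-1}$, \[ \frac{(1-\lambda\varepsilon)^2(1-3\lambda\varepsilon)}{(1-\lambda\varepsilon+6\lambda^2\varepsilon^2)^2}\sigma^2\le\overline{\sigma}^2(\lambda)\le\frac{\sigma^2}{(1-\lambda\varepsilon)^3}. \] *)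

From HB Require Import structures.
From mathcomp Require Import all_boot all_order all_algebra.
From mathcomp Require Import all_classical all_reals all_analysis.
Set Implicit Arguments. Unset Strict Implicit. Unset Printing Implicit Defensive.
Import Order.TTheory GRing.Theory Num.Theory.
Local Open Scope classical_set_scope.
Local Open Scope ring_scope.

(* Real-valued expectation of a real function f on the probability space:
   E f := \int f dP (as a real number; meaningful when f is integrable). *)
Definition Ef (d : measure_display) (T : measurableType d) (R : realType)
  (P : probability T R) (f : T -> R) : R :=
  fine (\int[P]_w (f w)%:E)%E.

Definition mutually_independent (d : measure_display) (T : measurableType d)
  (R : realType) (P : probability T R) (n : nat) (xi : 'I_n -> T -> R) : Prop :=
  forall (J : {set 'I_n}) (B : 'I_n -> set R),
    (forall j, j \in J -> measurable (B j)) ->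
    P (\bigcap_(j in [set j | j \in J]) (xi j @^-1` B j)) =
    (\prod_(j in J) P (xi j @^-1` B j))%E.

From HB Require Import structures.
From mathcomp Require Import all_boot all_order all_algebra.
From mathcomp Require Import all_classical all_reals all_analysis.
From mathcomp Require Import ring lra measurable_realfun.
Import Order.TTheory GRing.Theory Num.Theory numFieldNormedType.Exports.
Local Open Scope classical_set_scope.
Local Open Scope ring_scope.
Set Implicit Arguments. Unset Strict Implicit. Unset Printing Implicit Defensive.

(* Each summand of [sigmabar2 lam] is the variance [(C A - B^2) / A^2] of [xi i]
   under the tilted law [e^(lam xi) dP / A], where [A], [B], [C] are the
   expectations of [e^(lam xi)], [xi e^(lam xi)], [xi^2 e^(lam xi)]; so it suffices
   to bound one variable [X] with [s = E X^2] and [x = lam eps].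
   Expanding [e^(lam X)] and using Bernstein's condition termwise gives
   [A <= 1 + lam^2 s / (2 (1 - x))] and [C <= s / (1 - x)^3], while [A >= 1]
   because [e^y >= 1 + y]; hence the upper bound [(C A - B^2) / A^2 <= C].
   For the lower bound, integrating [(u - v)^2 (e^(lam (u + v)) - 1 - lam (u + v)) >= 0]
   in [v] and then in [u] gives [C A - B^2 >= s + lam E X^3 >= (1 - 3 x) s], and
   Bernstein's condition at [k = 4] together with [s^2 <= E X^4] gives [s <= 12 eps^2],
   so that [A <= (1 - x + 6 x^2) / (1 - x)].
   Exchanging expectation and series is justified by dominated convergence. *)

Lemma geometric_sum_le (R : realFieldType) (x : R) N :
  0 <= x -> x < 1 -> \sum_(k < N) x ^+ k <= (1 - x)^-1.
Proof.
move=> x0 x1; have x1' : 0 < 1 - x by lra.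
have geo : (1 - x) * \sum_(k < N) x ^+ k = 1 - x ^+ N.
  elim: N => [|N IH]; first by rewrite big_ord0 expr0; ring.
  by rewrite big_ord_recr /= mulrDr IH exprS; ring.
rewrite -[leRHS]mulr1 ler_pdivlMl // geo; have := exprn_ge0 N x0; lra.
Qed.

Lemma binomial2_sum_le (R : realFieldType) (x : R) N : 0 <= x -> x < 1 ->
  \sum_(k < N) (k.+1 * k.+2)%:R * x ^+ k <= 2 / (1 - x) ^+ 3.
Proof.
move=> x0 x1.
(* [q n] is the remainder in [(1 - x)^3] times the [n]-th partial sum of
   [2 (1 - x)^-3 = \sum_k (k + 1) (k + 2) x^k]. *)
pose q n : R := (n%:R + 1) * (n%:R + 2) - 2 * n%:R * (n%:R + 2) * x
  + n%:R * (n%:R + 1) * x ^+ 2.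
have sumE n : (1 - x) ^+ 3 * \sum_(k < n) (k.+1 * k.+2)%:R * x ^+ k = 2 - x ^+ n * q n.
  elim: n => [|n IH]; first by rewrite big_ord0 /q expr0; ring.
  by rewrite big_ord_recr /= mulrDr IH /q natrM [x ^+ n.+1]exprS !mulrS; ring.
have q_ge0 : 0 <= q N.
  have -> : q N = (1 - x) * (N%:R * (N%:R + 3) - N%:R * (N%:R + 1) * x) + 2.
    by rewrite /q; ring.
  have N0 : 0 <= N%:R :> R by [].
  have : 0 <= N%:R * (N%:R + 3) - N%:R * (N%:R + 1) * x :> R by nra.
  nra.
rewrite mulrC ler_pdivlMl ?exprn_gt0 ?subr_gt0 // sumE.
have := mulr_ge0 (exprn_ge0 N x0) q_ge0; lra.
Qed.

Lemma gram_ratio_le (R : realFieldType) (A B C : R) :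
  1 <= A -> 0 <= C -> (C * A - B ^+ 2) / A ^+ 2 <= C.
Proof.
move=> A1 C0; have A0 : 0 < A by lra.
rewrite ler_pdivrMr ?exprn_gt0 //.
have : C <= C * A by rewrite ler_peMr.
have : C * A <= C * A ^+ 2 by rewrite expr2 mulrA ler_peMr // mulr_ge0 // ltW.
have := sqr_ge0 B; lra.
Qed.

Lemma gram_ratio_ge (R : realFieldType) (x s D A : R) :
  0 <= x -> x < 1 -> 0 <= s -> 0 <= D ->
  (1 - 3 * x) * s <= D -> 1 <= A -> A <= (1 - x + 6 * x ^+ 2) / (1 - x) ->
  (1 - x) ^+ 2 * (1 - 3 * x) / (1 - x + 6 * x ^+ 2) ^+ 2 * s <= D / A ^+ 2.
Proof.
move=> x0 x1 s0 D0 Ds A1 Aup; have A0 : 0 < A by lra.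
have [x3|x3] := lerP (1 - 3 * x) 0.
  apply: le_trans (divr_ge0 D0 (exprn_ge0 2 (ltW A0))).
  have -> : (1 - x) ^+ 2 * (1 - 3 * x) / (1 - x + 6 * x ^+ 2) ^+ 2 * s =
      (1 - 3 * x) * ((1 - x) ^+ 2 / (1 - x + 6 * x ^+ 2) ^+ 2 * s) by ring.
  by apply: mulr_le0_ge0 => //; rewrite mulr_ge0 // divr_ge0 ?sqr_ge0.
have q0 : 0 < 1 - x + 6 * x ^+ 2 by have := sqr_ge0 x; lra.
have -> : (1 - x) ^+ 2 * (1 - 3 * x) / (1 - x + 6 * x ^+ 2) ^+ 2 * s =
    ((1 - 3 * x) * s) / ((1 - x + 6 * x ^+ 2) / (1 - x)) ^+ 2.
  by field; rewrite !gt_eqF // subr_gt0.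
apply: (@le_trans _ _ (((1 - 3 * x) * s) / A ^+ 2)); last first.
  by rewrite ler_pM2r ?invr_gt0 ?exprn_gt0.
apply: ler_wpM2l; first by rewrite mulr_ge0 // ltW.
rewrite lef_pV2 ?posrE ?exprn_gt0 ?(lt_le_trans A0) //.
by rewrite ler_pXn2r // ?nnegrE ltW // (lt_le_trans A0).
Qed.

Lemma exprD_exprN_ge0 (R : realDomainType) (a : R) k : 0 <= a ^+ k + (- a) ^+ k.
Proof.
rewrite exprNn -signr_odd; case: (boolP (odd k)) => k_odd.
  by rewrite expr1 mulN1r subrr.
by rewrite expr0 mul1r addr_ge0 // exprn_even_ge0.
Qed.

Lemma normrX_le_1Dsqr (R : realDomainType) (y : R) j :
  (j <= 2)%N -> `|y| ^+ j <= 1 + y ^+ 2.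
Proof.
have := sqr_ge0 y; case: j => [|[|[|j]]] // y2 _.
- by rewrite expr0 lerDl.
- rewrite expr1; have [y0|y0] := leP 0 y; [rewrite ger0_norm|rewrite ltr0_norm]; nra.
- by rewrite real_normK ?num_real // lerDr.
Qed.

Section Expectation.
Context d (T : measurableType d) (R : realType) (P : probability T R).
Implicit Types f g : T -> R.

Lemma eq_Ef f g : f =1 g -> Ef P f = Ef P g.
Proof. by move=> fg; apply: eq_Rintegral => w _. Qed.

Lemma Ef_cst c : Ef P (fun _ => c) = c.
Proof.
have P1 : fine (P setT) = 1 by rewrite probability_setT.
by rewrite [LHS]/Ef -/(Rintegral P setT (fun=> c)) Rintegral_cst // P1 mulr1.
Qed.

Lemma Ef_ge0 f : (forall w, 0 <= f w) -> 0 <= Ef P f.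
Proof. by move=> f0; apply: Rintegral_ge0 => w _. Qed.

Lemma integral_Ef f :
  P.-integrable setT (EFin \o f) -> (\int[P]_w (f w)%:E)%E = (Ef P f)%:E.
Proof. by move=> fi; rewrite /Ef fineK // integrable_fin_num. Qed.

Lemma EfD f g : P.-integrable setT (EFin \o f) -> P.-integrable setT (EFin \o g) ->
  Ef P (fun w => f w + g w) = Ef P f + Ef P g.
Proof. exact: RintegralD. Qed.

Lemma integrable_lincomb (I : Type) (r : seq I) (c : I -> R) (f : I -> T -> R) :
  (forall i, P.-integrable setT (EFin \o f i)) ->
  P.-integrable setT (EFin \o (fun w => \sum_(i <- r) c i * f i w)).
Proof.
move=> fi; apply: eq_integrable (integrable_sum measurableT r (P := xpredT)
  (fun i _ => integrableZl measurableT (c i) (fi i))) => // w _.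
by rewrite /= -sumEFin.
Qed.

Lemma Ef_lincomb (I : Type) (r : seq I) (c : I -> R) (f : I -> T -> R) :
  (forall i, P.-integrable setT (EFin \o f i)) ->
  Ef P (fun w => \sum_(i <- r) c i * f i w) = \sum_(i <- r) c i * Ef P (f i).
Proof.
move=> fi; elim: r => [|i r IH].
  by rewrite big_nil -[RHS](Ef_cst 0); apply: eq_Ef => w; rewrite big_nil.
rewrite big_cons -IH /Ef -!/(Rintegral _ _ _) -RintegralZl // -RintegralD //.
- by apply: eq_Rintegral => w _; rewrite big_cons.
- have := integrableZl measurableT (c i) (fi i).
  by apply: eq_integrable => // w _ /=; rewrite EFinM.
- exact: integrable_lincomb.
Qed.

End Expectation.

Section LinearCombination.
Variable R : pzRingType.

Definition lincomb (a : seq R) (v : nat -> R) := \sum_(i < size a) a`_i * v i.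

Lemma lincomb_nil v : lincomb [::] v = 0.
Proof. by rewrite /lincomb big_ord0. Qed.

Lemma lincomb_cons c a v : lincomb (c :: a) v = c * v 0%N + lincomb a (fun i => v i.+1).
Proof. by rewrite /lincomb big_ord_recl. Qed.

End LinearCombination.

Lemma series_exp_coeffE (R : realType) (y : R) N :
  series (exp_coeff y) N = \sum_(k < N) y ^+ k / k`!%:R.
Proof. by rewrite /series /exp_coeff /= big_mkord. Qed.

Lemma norm_series_exp_coeff_le (R : realType) (y : R) N :
  `|series (exp_coeff y) N| <= expR `|y|.
Proof.
rewrite series_exp_coeffE; apply: le_trans (ler_norm_sum _ _ _) _.
apply: (@le_trans _ _ (series (exp_coeff `|y|) N)).
  rewrite series_exp_coeffE; apply: ler_sum => k _.
  by rewrite normrM normfV normrX (@ger0_norm _ k`!%:R).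
apply: nondecreasing_cvgn_le; last exact: is_cvg_series_exp_coeff.
by apply: nondecreasing_series => n _ _; exact: exp_coeff_ge0.
Qed.

Lemma cvgn_lee_ub (R : realType) (u : (\bar R)^nat) (l K : \bar R) :
  u n @[n --> \oo] --> l -> (forall n, (u n <= K)%E) -> (l <= K)%E.
Proof.
move=> ul uK; rewrite -(cvg_lim _ ul) //; apply: lime_le; first exact: cvgP ul.
exact: nearW.
Qed.

Definition tilted_variance d (T : measurableType d) (R : realType)
    (P : probability T R) (X : T -> R) (lam : R) : R :=
  Ef P (fun w => X w ^+ 2 * expR (lam * X w)) / Ef P (fun w => expR (lam * X w))
  - (Ef P (fun w => X w * expR (lam * X w))) ^+ 2
    / (Ef P (fun w => expR (lam * X w))) ^+ 2.

Section TiltedVariance.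
Context d (T : measurableType d) (R : realType) (P : probability T R).
Variables (X : T -> R) (eps lam : R).
Hypotheses (mX : measurable_fun setT X)
  (iX : forall k, P.-integrable setT (fun w => (X w ^+ k)%:E))
  (EX0 : Ef P X = 0) (eps_gt0 : 0 < eps)
  (bernstein : forall k, (3 <= k)%N ->
     `|Ef P (fun w => X w ^+ k)| <=
       2^-1 * (k`!)%:R * eps ^+ (k - 2) * Ef P (fun w => X w ^+ 2))
  (lam_ge0 : 0 <= lam) (lam_eps_lt1 : lam * eps < 1).

Let m k := Ef P (fun w => X w ^+ k).
Let s := m 2.
Let M := 1 + s / eps ^+ 2.
Let mexp j := Ef P (fun w => X w ^+ j * expR (lam * X w)).

Let lam_eps_ge0 : 0 <= lam * eps. Proof. by rewrite mulr_ge0 // ltW. Qed.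

Lemma moment0 : m 0 = 1.
Proof. by rewrite -[RHS](Ef_cst P); apply: eq_Ef => w; rewrite expr0. Qed.

Lemma moment1 : m 1 = 0.
Proof. by rewrite -EX0; apply: eq_Ef => w; rewrite expr1. Qed.

Lemma moment2_ge0 : 0 <= s.
Proof. by apply: Ef_ge0 => w; exact: sqr_ge0. Qed.

Lemma moment_bernstein k : `|m k.+2| <= 2^-1 * k.+2`!%:R * eps ^+ k * s.
Proof.
case: k => [|k]; last exact: bernstein.
by rewrite ger0_norm ?moment2_ge0 // expr0 mulr1 mulVf ?mul1r.
Qed.

Lemma moment3_le : `|m 3| <= 3 * eps * s.
Proof.
have -> : 3 * eps * s = 2^-1 * 3`!%:R * eps ^+ 1 * s
  by rewrite expr1 (_ : 3`! = 6)%N //; field.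
exact: moment_bernstein.
Qed.

Lemma moment_le k : `|m k| <= M * k`!%:R * eps ^+ k.
Proof.
have e2 : 0 < eps ^+ 2 by rewrite exprn_gt0.
have M1 : 1 <= M by rewrite lerDl divr_ge0 ?moment2_ge0 // ltW.
case: k => [|[|k]].
- by rewrite moment0 normr1 fact0 expr0 !mulr1.
- by rewrite moment1 normr0 !mulr_ge0 ?exprn_ge0 ?(ltW eps_gt0) //; lra.
apply: le_trans (moment_bernstein k) _.
set F := k.+2`!%:R; set E := eps ^+ k.
have FE : 0 <= F * E by rewrite mulr_ge0 ?exprn_ge0 // ltW.
have -> : M * F * eps ^+ k.+2 = F * E * eps ^+ 2 + F * E * s.
  by rewrite /M -[k.+2]addn2 exprD -/E; field; rewrite gt_eqF.
have := mulr_ge0 FE (ltW e2); have := mulr_ge0 FE moment2_ge0.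
have -> : 2^-1 * F * E * s = 2^-1 * (F * E * s) by ring.
lra.
Qed.

Let series_lincomb j N w : X w ^+ j * series (exp_coeff (lam * X w)) N =
  \sum_(k < N) lam ^+ k / k`!%:R * X w ^+ (k + j).
Proof.
rewrite series_exp_coeffE mulr_sumr; apply: eq_bigr => k _.
by rewrite exprMn exprD; ring.
Qed.

Lemma integrable_Xj_series j N :
  P.-integrable setT (EFin \o (fun w => X w ^+ j * series (exp_coeff (lam * X w)) N)).
Proof.
apply: eq_integrable (integrable_lincomb _ _ (fun k : 'I_N => iX (k + j))) => // w _.
by rewrite /= series_lincomb.
Qed.

Lemma Ef_Xj_series j N :
  Ef P (fun w => X w ^+ j * series (exp_coeff (lam * X w)) N) =
  \sum_(k < N) lam ^+ k / k`!%:R * m (k + j).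
Proof.
by rewrite (eq_Ef _ (series_lincomb j N)) (Ef_lincomb _ _ (fun k : 'I_N => iX (k + j))).
Qed.

(* Symmetrising in [lam] kills the odd powers, so the partial sums [dom_partial N]
   of [dom] are nonnegative and nondecreasing in [N]: monotone convergence and
   [moment_le] make [dom] integrable, and it dominates [X^j e^(lam X)] and its
   partial sums for [j <= 2]. *)
Let dom w := (1 + X w ^+ 2) * (expR (lam * X w) + expR (- lam * X w)).
Let dom_partial N w := \sum_(k < N) (lam ^+ k + (- lam) ^+ k) / k`!%:R *
  (X w ^+ k + X w ^+ (k + 2)).

Let measurable_expR_scale c : measurable_fun setT (fun w => expR (c * X w)).
Proof. by apply: measurableT_comp => //; apply: measurable_funM. Qed.

Let integrable_moment_pair k :
  P.-integrable setT (EFin \o (fun w => X w ^+ k + X w ^+ (k + 2))).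
Proof.
have := integrableD measurableT (iX k) (iX (k + 2)).
by apply: eq_integrable => // w _ /=; rewrite EFinD.
Qed.

Lemma dom_partial_term_ge0 k (y : R) :
  0 <= (lam ^+ k + (- lam) ^+ k) / k`!%:R * (y ^+ k + y ^+ (k + 2)).
Proof.
have -> : (lam ^+ k + (- lam) ^+ k) / k`!%:R * (y ^+ k + y ^+ (k + 2)) =
    ((lam * y) ^+ k + (- (lam * y)) ^+ k) / k`!%:R * (1 + y ^+ 2).
  by rewrite -mulNr !exprMn exprD; ring.
by rewrite mulr_ge0 ?divr_ge0 ?exprD_exprN_ge0 // addr_ge0 ?sqr_ge0.
Qed.

Lemma dom_partial_cvg w : dom_partial N w @[N --> \oo] --> dom w.
Proof.
have -> : dom_partial^~ w = fun N => (1 + X w ^+ 2) *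
    (series (exp_coeff (lam * X w)) N + series (exp_coeff (- lam * X w)) N).
  apply/funext => N; rewrite !series_exp_coeffE -big_split mulr_sumr.
  by apply: eq_bigr => k _ /=; rewrite !exprMn exprD; ring.
by apply: cvgM; [exact: cvg_cst | apply: cvgD; exact: is_cvg_series_exp_coeff].
Qed.

Lemma dom_partial_term_le k :
  (lam ^+ k + (- lam) ^+ k) / k`!%:R * Ef P (fun w => X w ^+ k + X w ^+ (k + 2))
  <= 2 * M * (1 + eps ^+ 2) * ((k.+1 * k.+2)%:R * (lam * eps) ^+ k).
Proof.
rewrite EfD; [|exact: iX..]; set F : R := k`!%:R; set K : R := (k.+1 * k.+2)%:R.
have F0 : 0 < F by rewrite ltr0n fact_gt0.
have M0 : 0 <= M by rewrite addr_ge0 ?divr_ge0 ?moment2_ge0 ?exprn_ge0 ?ltW.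
have K1 : 1 <= K by rewrite ler1n muln_gt0.
have E0 : 0 <= lam ^+ k * eps ^+ k by rewrite mulr_ge0 ?exprn_ge0 // ltW.
have coef_le : `|(lam ^+ k + (- lam) ^+ k) / F| <= 2 * lam ^+ k / F.
  rewrite normrM normfV (gtr0_norm F0) ler_pM2r ?invr_gt0 //.
  apply: le_trans (ler_normD _ _) _; rewrite !normrX normrN ger0_norm //; lra.
have moments_le : `|m k + m (k + 2)| <= M * F * eps ^+ k * (1 + K * eps ^+ 2).
  apply: le_trans (ler_normD _ _) _.
  have -> : M * F * eps ^+ k * (1 + K * eps ^+ 2) =
      M * F * eps ^+ k + M * (k + 2)`!%:R * eps ^+ (k + 2).
    by rewrite /F /K exprD !addn2 !factS !natrM; ring.
  by apply: lerD; exact: moment_le.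
apply: le_trans (ler_norm _) _; rewrite normrM.
apply: le_trans (ler_pM _ _ coef_le moments_le) _ => //.
have -> : 2 * lam ^+ k / F * (M * F * eps ^+ k * (1 + K * eps ^+ 2)) =
    2 * M * (lam ^+ k * eps ^+ k) * (1 + K * eps ^+ 2).
  by field; rewrite gt_eqF.
have -> : 2 * M * (1 + eps ^+ 2) * (K * (lam * eps) ^+ k) =
    2 * M * (lam ^+ k * eps ^+ k) * (K * (1 + eps ^+ 2)).
  by rewrite exprMn; ring.
apply: ler_wpM2l; first by rewrite mulr_ge0 // mulr_ge0.
have := sqr_ge0 eps; nra.
Qed.

Lemma Ef_dom_partial_le N :
  Ef P (dom_partial N) <= 4 * M * (1 + eps ^+ 2) / (1 - lam * eps) ^+ 3.
Proof.
rewrite (Ef_lincomb _ _ (fun k : 'I_N => integrable_moment_pair k)).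
apply: le_trans (ler_sum _ (fun (k : 'I_N) _ => dom_partial_term_le k)) _.
rewrite -mulr_sumr [leRHS](_ : _ = 2 * M * (1 + eps ^+ 2) * (2 / (1 - lam * eps) ^+ 3));
  last by ring.
apply: ler_wpM2l; last exact: binomial2_sum_le lam_eps_ge0 lam_eps_lt1.
by rewrite !mulr_ge0 // ?addr_ge0 ?divr_ge0 ?moment2_ge0 ?exprn_ge0 // ltW.
Qed.

Let dom_ge0 w : 0 <= dom w.
Proof. by rewrite mulr_ge0 ?addr_ge0 ?expR_ge0 ?sqr_ge0. Qed.

Lemma integrable_dom : P.-integrable setT (EFin \o dom).
Proof.
apply/integrableP; split.
  apply/measurable_EFinP; apply: measurable_funM.
    by apply: measurable_funD => //; exact: measurable_funX.
  by apply: measurable_funD; exact: measurable_expR_scale.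
have -> : (\int[P]_w `|(EFin \o dom) w|)%E =
    (\int[P]_w limn (fun N => (dom_partial N w)%:E))%E.
  apply: eq_integral => w _ /=; rewrite ger0_norm //.
  apply/esym/cvg_lim => //; apply: cvg_EFin; first exact: nearW.
  exact: dom_partial_cvg.
have dom_partial_int N : P.-integrable setT (EFin \o dom_partial N).
  exact: integrable_lincomb (fun k : 'I_N => integrable_moment_pair k).
have dom_partial_ge0 N w : 0 <= dom_partial N w.
  by apply: sumr_ge0 => k _; exact: dom_partial_term_ge0.
have dom_partial_nd w : {homo dom_partial^~ w : N N' / (N <= N')%N >-> N <= N'}.
  apply/nondecreasing_seqP => N; rewrite [leRHS]big_ord_recr lerDl.
  exact: dom_partial_term_ge0.
have := @cvg_monotone_convergence _ _ _ P _ measurableT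
  (fun N w => (dom_partial N w)%:E) (fun N => measurable_int _ (dom_partial_int N)).
have ge0 N w : [set: T] w -> (0 <= (dom_partial N w)%:E)%E by rewrite lee_fin.
have nd w : [set: T] w ->
    {homo (fun N => (dom_partial N w)%:E) : N N' / (N <= N')%N >-> (N <= N')%E}.
  by move=> _ N N' NN'; rewrite lee_fin; exact: dom_partial_nd.
move=> /(_ ge0 nd) cvg_Ef.
apply: (@le_lt_trans _ _ (4 * M * (1 + eps ^+ 2) / (1 - lam * eps) ^+ 3)%:E).
  apply: cvgn_lee_ub cvg_Ef _ => N.
  by rewrite integral_Ef // lee_fin Ef_dom_partial_le.
exact: ltry.
Qed.

Let Xj_expR_le_dom j w : (j <= 2)%N -> `|X w ^+ j * expR (lam * X w)| <= dom w.
Proof.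
move=> j2; rewrite normrM normrX (ger0_norm (expR_ge0 _)).
by apply: ler_pM => //; [exact: normrX_le_1Dsqr | rewrite lerDl expR_ge0].
Qed.

Let Xj_series_le_dom j N w : (j <= 2)%N ->
  `|X w ^+ j * series (exp_coeff (lam * X w)) N| <= dom w.
Proof.
move=> j2; rewrite normrM normrX; apply: ler_pM => //; first exact: normrX_le_1Dsqr.
apply: le_trans (norm_series_exp_coeff_le _ _) _.
have [y0|y0] := leP 0 (lam * X w).
  by rewrite ger0_norm // lerDl expR_ge0.
by rewrite ltr0_norm // -mulNr lerDr expR_ge0.
Qed.

Lemma integrable_Xj_expR j : (j <= 2)%N ->
  P.-integrable setT (EFin \o (fun w => X w ^+ j * expR (lam * X w))).
Proof.
move=> j2; apply: le_integrable integrable_dom => //.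
  apply/measurable_EFinP; apply: measurable_funM; first exact: measurable_funX.
  exact: measurable_expR_scale.
by move=> w _ /=; rewrite !lee_fin (ger0_norm (dom_ge0 w)) Xj_expR_le_dom.
Qed.

Lemma mexp_le j K : (j <= 2)%N ->
  (forall N, \sum_(k < N) lam ^+ k / k`!%:R * m (k + j) <= K) -> mexp j <= K.
Proof.
move=> j2 partial_le; rewrite -lee_fin -integral_Ef; last exact: integrable_Xj_expR.
pose u N w := (X w ^+ j * series (exp_coeff (lam * X w)) N)%:E.
have u_cvg w : [set: T] w -> u N w @[N --> \oo] --> (X w ^+ j * expR (lam * X w))%:E.
  move=> _; apply: cvg_EFin; first exact: nearW.
  by apply: cvgM; [exact: cvg_cst | exact: is_cvg_series_exp_coeff].
have u_dom N w : [set: T] w -> (`|u N w| <= (dom w)%:E)%E.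
  by move=> _; rewrite lee_fin; exact: Xj_series_le_dom.
have := dominated_cvg measurableT (fun N => measurable_int _ (integrable_Xj_series j N))
  u_cvg (fun w _ => isT : ((dom w)%:E \is a fin_num)) integrable_dom u_dom.
move=> /cvgn_lee_ub; apply => N.
by rewrite integral_Ef ?lee_fin ?Ef_Xj_series //; exact: integrable_Xj_series.
Qed.


Lemma mexp2_le : mexp 2 <= s / (1 - lam * eps) ^+ 3.
Proof.
apply: mexp_le => // N.
apply: (@le_trans _ _ (\sum_(k < N) s / 2 * ((k.+1 * k.+2)%:R * (lam * eps) ^+ k))).
  apply: ler_sum => k _; rewrite addn2.
  apply: le_trans (ler_wpM2l _ (le_trans (ler_norm _) (moment_bernstein k))) _.
    by rewrite divr_ge0 ?exprn_ge0.
  rewrite le_eqVlt; apply/orP; left; apply/eqP.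
  by rewrite !factS !natrM exprMn; field; rewrite gt_eqF.
rewrite -mulr_sumr [leRHS](_ : _ = s / 2 * (2 / (1 - lam * eps) ^+ 3)); last first.
  by field; rewrite subr_eq0 eq_sym lt_eqF.
apply: ler_wpM2l; last exact: binomial2_sum_le lam_eps_ge0 lam_eps_lt1.
by rewrite divr_ge0 ?moment2_ge0.
Qed.

Lemma mexp0_le : mexp 0 <= 1 + lam ^+ 2 * s / (2 * (1 - lam * eps)).
Proof.
have Q0 : 0 <= lam ^+ 2 * s / (2 * (1 - lam * eps)).
  by rewrite divr_ge0 ?mulr_ge0 ?exprn_ge0 ?moment2_ge0 // subr_ge0 ltW.
apply: mexp_le => // -[|[|N]].
- by rewrite big_ord0 addr_ge0.
- by rewrite big_ord1 /= moment0 expr0 fact0 divr1 mulr1 lerDl.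
rewrite 2!big_ord_recl /= moment0 moment1 expr0 expr1 fact0 divr1 mulr1 mulr0.
rewrite add0r lerD2l.
apply: (@le_trans _ _ (\sum_(i < N) lam ^+ 2 * s / 2 * (lam * eps) ^+ i)).
  apply: ler_sum => i _; rewrite /bump /= !add1n addn0.
  apply: le_trans (ler_wpM2l _ (le_trans (ler_norm _) (moment_bernstein i))) _.
    by rewrite divr_ge0 ?exprn_ge0.
  rewrite le_eqVlt; apply/orP; left; apply/eqP.
  by rewrite exprMn -addn2 exprD; field; rewrite gt_eqF.
rewrite -mulr_sumr invfM mulrA.
apply: ler_wpM2l; last exact: geometric_sum_le lam_eps_ge0 lam_eps_lt1.
by rewrite divr_ge0 ?mulr_ge0 ?exprn_ge0 ?moment2_ge0.
Qed.

Lemma Ef_lincomb_ge0 (a b : seq R) : (size a <= 3)%N ->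
  (forall y, 0 <= lincomb a (fun i => y ^+ i * expR (lam * y)) + lincomb b (fun i => y ^+ i)) ->
  0 <= lincomb a mexp + lincomb b m.
Proof.
move=> a3 ab.
have ia (i : 'I_(size a)) := integrable_Xj_expR (leq_trans (ltn_ord i) a3).
have ib (i : 'I_(size b)) := iX i.
have := Ef_ge0 P (fun w => ab (X w)); rewrite /lincomb.
by rewrite EfD ?(Ef_lincomb _ _ ia) ?(Ef_lincomb _ _ ib) //; exact: integrable_lincomb.
Qed.

Lemma mexp0_ge1 : 1 <= mexp 0.
Proof.
suff : 0 <= lincomb [:: 1] mexp + lincomb [:: -1; - lam] m.
  by rewrite !lincomb_cons !lincomb_nil /= moment0 moment1; lra.
apply: Ef_lincomb_ge0 => // y; rewrite !lincomb_cons !lincomb_nil /= expr0 expr1.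
have := expR_ge1Dx (lam * y); lra.
Qed.

Lemma mexp_gram_ge0 : 0 <= mexp 2 * mexp 0 - mexp 1 ^+ 2.
Proof.
have A0 : 0 < mexp 0 by have := mexp0_ge1; lra.
set t := mexp 1 / mexp 0.
suff : 0 <= lincomb [:: t ^+ 2; - (2 * t); 1] mexp + lincomb [::] m.
  rewrite !lincomb_cons !lincomb_nil /= => gram_t.
  have -> : mexp 2 * mexp 0 - mexp 1 ^+ 2 =
      mexp 0 * (t ^+ 2 * mexp 0 + (- (2 * t) * mexp 1 + (1 * mexp 2 + 0)) + 0).
    by rewrite /t; field; rewrite gt_eqF.
  by rewrite mulr_ge0 // ltW.
apply: Ef_lincomb_ge0 => // y; rewrite !lincomb_cons !lincomb_nil /= expr0 expr1.
have := mulr_ge0 (sqr_ge0 (y - t)) (expR_ge0 (lam * y)); lra.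
Qed.

(* The expectation in [v = X] of [(u - v)^2 (e^(lam (u + v)) - 1 - lam (u + v)) >= 0]. *)
Lemma tilted_gap_ge0 u :
  0 <= expR (lam * u) * (u ^+ 2 * mexp 0 - 2 * u * mexp 1 + mexp 2)
       - (1 + lam * u) * (u ^+ 2 + s) + 2 * lam * u * s - lam * m 3.
Proof.
set eu := expR (lam * u).
suff : 0 <= lincomb [:: eu * u ^+ 2; - (2 * u * eu); eu] mexp +
    lincomb [:: - ((1 + lam * u) * u ^+ 2); 2 * u * (1 + lam * u) - lam * u ^+ 2;
                - (1 + lam * u) + 2 * lam * u; - lam] m.
  by rewrite !lincomb_cons !lincomb_nil /= moment0 moment1 -/s; lra.
apply: Ef_lincomb_ge0 => // y; rewrite !lincomb_cons !lincomb_nil /= expr0 expr1.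
have : 0 <= (u - y) ^+ 2 * (eu * expR (lam * y) - (1 + (lam * u + lam * y))).
  by rewrite mulr_ge0 ?sqr_ge0 // subr_ge0 /eu -expRD expR_ge1Dx.
lra.
Qed.

Lemma mexp_gram_ge : s + lam * m 3 <= mexp 2 * mexp 0 - mexp 1 ^+ 2.
Proof.
suff : 0 <= lincomb [:: mexp 2; - (2 * mexp 1); mexp 0] mexp +
    lincomb [:: - s - lam * m 3; lam * s; -1; - lam] m.
  by rewrite !lincomb_cons !lincomb_nil /= moment0 moment1 -/s; lra.
apply: Ef_lincomb_ge0 => // y; rewrite !lincomb_cons !lincomb_nil /= expr0 expr1.
have := tilted_gap_ge0 y; lra.
Qed.

(* [s^2 <= E X^4 <= 12 eps^2 s]. *)
Lemma moment2_le : s <= 12 * eps ^+ 2.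
Proof.
have m4_le : m 4 <= 12 * eps ^+ 2 * s.
  have -> : 12 * eps ^+ 2 * s = 2^-1 * 4`!%:R * eps ^+ 2 * s.
    by rewrite (_ : 4`! = 24)%N //; field.
  exact: le_trans (ler_norm _) (moment_bernstein 2).
have m4_ge : s ^+ 2 <= m 4.
  suff : 0 <= lincomb [::] mexp + lincomb [:: s ^+ 2; 0; - (2 * s); 0; 1] m.
    by rewrite !lincomb_cons !lincomb_nil /= moment0 -/s; lra.
  apply: Ef_lincomb_ge0 => // y; rewrite !lincomb_cons !lincomb_nil /= expr0.
  have := sqr_ge0 (y ^+ 2 - s); lra.
have [->|s_gt0] := eqVneq s 0; first by rewrite mulr_ge0 ?sqr_ge0.
by have := le_trans m4_ge m4_le; rewrite expr2 ler_pM2r // lt_def s_gt0 moment2_ge0.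
Qed.

Lemma mexp0_le_ratio :
  mexp 0 <= (1 - lam * eps + 6 * (lam * eps) ^+ 2) / (1 - lam * eps).
Proof.
have x1 : 0 < 1 - lam * eps by rewrite subr_gt0.
apply: le_trans mexp0_le _.
have -> : (1 - lam * eps + 6 * (lam * eps) ^+ 2) / (1 - lam * eps) =
    1 + 12 * (lam * eps) ^+ 2 / (2 * (1 - lam * eps)).
  by field; rewrite gt_eqF.
rewrite lerD2l ler_pM2r ?invr_gt0 ?mulr_gt0 // exprMn mulrCA.
by rewrite ler_wpM2l ?sqr_ge0 ?moment2_le.
Qed.

Theorem tilted_variance_bounds :
  (1 - lam * eps) ^+ 2 * (1 - 3 * lam * eps) /
    (1 - lam * eps + 6 * lam ^+ 2 * eps ^+ 2) ^+ 2 * s <= tilted_variance P X lam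
  /\ tilted_variance P X lam <= s / (1 - lam * eps) ^+ 3.
Proof.
have A1 := mexp0_ge1; have A0 : 0 < mexp 0 by lra.
have -> : tilted_variance P X lam = (mexp 2 * mexp 0 - mexp 1 ^+ 2) / mexp 0 ^+ 2.
  rewrite /tilted_variance -/(mexp 2).
  have -> : Ef P (fun w => expR (lam * X w)) = mexp 0.
    by apply: eq_Ef => w; rewrite expr0 mul1r.
  have -> : Ef P (fun w => X w * expR (lam * X w)) = mexp 1.
    by apply: eq_Ef => w; rewrite expr1.
  by field; rewrite gt_eqF.
split; last first.
  apply: le_trans (gram_ratio_le _ A1 _) mexp2_le.
  by apply: Ef_ge0 => w; rewrite mulr_ge0 ?sqr_ge0 ?expR_ge0.
rewrite -[3 * lam * eps]mulrA -[6 * _ * _]mulrA -exprMn.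
apply: gram_ratio_ge => //; rewrite ?moment2_ge0 ?mexp_gram_ge0 ?mexp0_le_ratio //.
apply: le_trans mexp_gram_ge.
have := moment3_le; rewrite ler_norml => /andP[m3_ge _].
have := ler_wpM2l lam_ge0 m3_ge; lra.
Qed.

End TiltedVariance.

Unset Implicit Arguments.

Theorem lemma3 (d : measure_display) (T : measurableType d) (R : realType)
  (P : probability T R) (n : nat) (xi : 'I_n -> T -> R) (eps : R) :
  (forall i, measurable_fun setT (xi i)) ->
  mutually_independent P xi ->
  (forall i k, P.-integrable setT (fun w => (xi i w ^+ k)%:E)) ->
  (forall i, Ef P (xi i) = 0) ->
  0 < eps ->
  (forall i k, (3 <= k)%N ->
     `|Ef P (fun w => xi i w ^+ k)| <=
       2^-1 * (k`!)%:R * eps ^+ (k - 2) * Ef P (fun w => xi i w ^+ 2)) ->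
  let sigma2 := \sum_(i < n) Ef P (fun w => xi i w ^+ 2) in
  let sigmabar2 := fun lam : R =>
    \sum_(i < n)
      (Ef P (fun w => xi i w ^+ 2 * expR (lam * xi i w)) /
         Ef P (fun w => expR (lam * xi i w))
       - (Ef P (fun w => xi i w * expR (lam * xi i w))) ^+ 2 /
         (Ef P (fun w => expR (lam * xi i w))) ^+ 2) in
  forall lam : R, 0 <= lam -> lam < eps^-1 ->
    (1 - lam * eps) ^+ 2 * (1 - 3 * lam * eps) /
      (1 - lam * eps + 6 * lam ^+ 2 * eps ^+ 2) ^+ 2 * sigma2
      <= sigmabar2 lam
    /\ sigmabar2 lam <= sigma2 / (1 - lam * eps) ^+ 3.
Proof.
move=> mX _ iX EX0 eps_gt0 bern sigma2 sigmabar2 lam lam_ge0 lam_lt.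
have lam_eps_lt1 : lam * eps < 1.
  by rewrite -(ltr_pM2r eps_gt0) mulVf ?gt_eqF in lam_lt.
have bounds i := tilted_variance_bounds (mX i) (iX i) (EX0 i) eps_gt0 (bern i)
  lam_ge0 lam_eps_lt1.
split.
  by rewrite mulr_sumr; apply: ler_sum => i _; exact: (bounds i).1.
by rewrite mulr_suml; apply: ler_sum => i _; exact: (bounds i).2.
Qed.
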